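(* Let $\alpha\in\mathbb N^n$ and let $\mathcal M$ be a matroid on $[n]$, regarded as a discrete polymatroid whose bases are $(0,1)$-vectors. If $\mathcal M$ satisfies White's conjecture, i.e. its toric ideal $I_{\mathcal M}$ is generated by quadratic binomials corresponding to double swaps, then $\mathcal M^\alpha$ satisfies White's conjecture, i.e. $I_{\mathcal M^\alpha}$ is generated by quadratic binomials corresponding to double swaps.
   Context: $K$ is a field, $\mathbb N$ the positive integers. For a discrete polymatroid (in particular a matroid) $P\subset\mathbb Z^n_+$ with set of bases $\mathcal B_P$ (the $\preceq$-maximal elements), $S_P=K[y_{\mathbf u}:\mathbf u\in\mathcal B_P]$ and $I_P$ is the kernel of the $K$-algebra map $S_P\to K[x_1,\ldots,x_n]$, $y_{\mathbf u}\mapsto x_1^{\mathbf u(1)}\cdots x_n^{\mathbf u(n)}$. A pair of bases $(\mathbf v_1,\mathbf v_2)$ is obtained from $(\mathbf u_1,\mathbf u_2)$ by a double swap if $\mathbf v_1=\mathbf u_1+\epsilon_j-\epsilon_i$, $\mathbf v_2=\mathbf u_2+\epsilon_i-\epsilon_j$ with $\mathbf u_1(i)>\mathbf u_2(i)$ and $\mathbf u_2(j)>\mathbf u_1(j)$; the corresponding binomial is $y_{\mathbf u_1}y_{\mathbf u_2}-y_{\mathbf v_1}y_{\mathbf v_2}$. For $\alpha=(k_1,\ldots,k_n)$, index coordinates of $\mathbb Z^{|\alpha|}$ by pairs $(i,j)$, $1\le j\le k_i$, let $\pi_0(\mathbf w)(i)=\sum_j\mathbf w(i,j)$, and $\mathbf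 u^\alpha=\{\mathbf w\in\mathbb Z^{|\alpha|}_+:\pi_0(\mathbf w)=\mathbf u\}$. $P^\alpha$ is the discrete polymatroid with set of bases $\bigcup_{\mathbf u\in\mathcal B_P}\mathbf u^\alpha$ (for a matroid these bases are again $(0,1)$-vectors, so $\mathcal M^\alpha$ is a matroid). *)

From HB Require Import structures.
From mathcomp Require Import all_boot all_order all_algebra.
From mathcomp Require Import mpoly.

Set Implicit Arguments.
Unset Strict Implicit.
Unset Printing Implicit Defensive.

Import GRing.Theory.
Local Open Scope ring_scope.

(* A matroid on a finite ground set E is given by its set of bases; a basis
   B is identified with its (0,1)-vector, the indicator vector [e \in B]. *)

Section Matroid.
Variable E : finType.

Definition ivec (U : {set E}) : E -> int := fun e => ((e \in U) : nat)%:Z.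

Definition eps (e : E) : E -> int := fun e' => ((e' == e) : nat)%:Z.

Definition is_matroid (B : {set {set E}}) : Prop :=
  (exists U, U \in B) /\
  forall U1 U2, U1 \in B -> U2 \in B ->
    forall x, x \in U1 :\: U2 ->
      exists2 y, y \in U2 :\: U1 & (U1 :\ x) :|: [set y] \in B.

Definition double_swap (U1 U2 V1 V2 : {set E}) : Prop :=
  exists i j : E,
    [/\ ivec U1 i > ivec U2 i, ivec U2 j > ivec U1 j,
        (forall e, ivec V1 e = ivec U1 e + eps j e - eps i e) &
        (forall e, ivec V2 e = ivec U2 e + eps i e - eps j e)].

Variable K : fieldType.
Variable B : {set {set E}}.

Definition basisT := {U : {set E} | U \in B}.

Definition SP := {mpoly K[#|{: basisT}|]}.
Definition XP := {mpoly K[#|{: E}|]}.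

Definition yvar (u : basisT) : SP := 'X_(enum_rank u).
Definition xvar (e : E) : XP := 'X_(enum_rank e).

Definition xmon (U : {set E}) : XP := \prod_(e : E) xvar e ^+ (e \in U).

Definition toric_map (p : SP) : XP :=
  p \mPo [tuple xmon (val (enum_val i)) | i < #|{: basisT}|].

Definition toric_ideal : pred SP := fun p => toric_map p == 0.

Definition double_swap_binomial (p : SP) : Prop :=
  exists u1 u2 v1 v2 : basisT,
    double_swap (val u1) (val u2) (val v1) (val v2) /\
    p = yvar u1 * yvar u2 - yvar v1 * yvar v2.

End Matroid.

Definition in_ideal_gen (R : comNzRingType) (G : R -> Prop) (p : R) : Prop :=
  exists s : seq (R * R), (forall x, x \in s -> G x.2) /\
                          p = \sum_(x <- s) x.1 * x.2.

Definition white (E : finType) (K : fieldType) (B : {set {set E}}) : Prop :=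
  forall p : SP K B, toric_ideal p <-> in_ideal_gen (@double_swap_binomial E K B) p.

(* the ground set of M^alpha: pairs (i, j) with j < k i *)
Definition alphaE (n : nat) (k : 'I_n -> nat) := {i : 'I_n & 'I_(k i)}.

(* bases of M^alpha: the (0,1)-vectors w with pi_0(w) = u for some basis u *)
Definition alpha_bases (n : nat) (k : 'I_n -> nat) (B : {set {set 'I_n}})
  : {set {set alphaE k}} :=
  [set W : {set alphaE k} |
     [exists U in B, [forall i : 'I_n,
        (\sum_(j < k i) ((Tagged (fun i0 => 'I_(k i0)) j \in W) : nat))%N
          == (i \in U) ]]].

From HB Require Import structures.
From mathcomp Require Import all_boot all_order all_algebra.
From mathcomp Require Import mpoly ssrcomplements.
From Stdlib Require Import ClassicalEpsilon.

(* A monomial of S_{M^alpha} is a multiset of bases w of M^alpha, and its toric image is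
   the vector of multiplicities with which the points (i, j) are covered. Swapping two
   points of the same fibre {i} x [k_i] between two bases is a double swap of M^alpha
   that preserves the projections pi_0(w); moving points fibre by fibre, two multisets
   with the same projection to M and the same multiplicities are congruent modulo the
   double-swap ideal. If two multisets merely have the same multiplicities, their
   projections have the same toric image in M, so by White's conjecture for M their
   difference lies in the double-swap ideal of M. Every double swap of M lifts to a
   double swap of M^alpha, so the linear map sending a monomial of M to a lift with
   prescribed multiplicities carries that ideal into the double-swap ideal of M^alpha.
   Hence monomials with equal toric images are congruent, so every p is congruent to a
   linear function of its toric image, which vanishes on the kernel. *)

Set Implicit Arguments.
Unset Strict Implicit.
Unset Printing Implicit Defensive.
Import GRing.Theory.
Local Open Scope ring_scope.

Section IdealGen.
Variables (R : comNzRingType) (G : R -> Prop).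
Local Notation I := (in_ideal_gen G).

Lemma in_ideal_gen0 : I 0.
Proof. by exists [::]; rewrite big_nil. Qed.

Lemma in_ideal_gen_gen p : G p -> I p.
Proof.
by move=> Gp; exists [:: (1, p)]; rewrite big_seq1 mul1r; split=> // x /[!inE] /eqP->.
Qed.

Lemma in_ideal_genD p q : I p -> I q -> I (p + q).
Proof.
move=> [s [Gs ->]] [t [Gt ->]]; exists (s ++ t); rewrite big_cat; split=> // x.
by rewrite mem_cat => /orP[/Gs|/Gt].
Qed.

Lemma in_ideal_genMl r p : I p -> I (r * p).
Proof.
move=> [s [Gs ->]]; exists [seq (r * x.1, x.2) | x <- s]; split.
  by move=> x /mapP[y /Gs Gy ->].
by rewrite big_map mulr_sumr; apply: eq_bigr => x _; rewrite mulrA.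
Qed.

Lemma in_ideal_genN p : I p -> I (- p).
Proof. by rewrite -mulN1r; apply: in_ideal_genMl. Qed.

Lemma in_ideal_gen_sum (J : eqType) (s : seq J) (F : J -> R) :
  (forall j, j \in s -> I (F j)) -> I (\sum_(j <- s) F j).
Proof.
elim: s => [|j s IHs] Is; first by rewrite big_nil; apply: in_ideal_gen0.
rewrite big_cons; apply: in_ideal_genD; first by apply: Is; rewrite mem_head.
by apply: IHs => j' s_j'; apply: Is; rewrite inE s_j' orbT.
Qed.

Definition eqmod_ideal p q := I (p - q).

Lemma eqmod_ideal_refl p : eqmod_ideal p p.
Proof. by rewrite /eqmod_ideal subrr; apply: in_ideal_gen0. Qed.

Lemma eqmod_ideal_sym p q : eqmod_ideal p q -> eqmod_ideal q p.
Proof. by move=> /in_ideal_genN; rewrite opprB. Qed.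

Lemma eqmod_ideal_trans p q r :
  eqmod_ideal p q -> eqmod_ideal q r -> eqmod_ideal p r.
Proof. by rewrite /eqmod_ideal -[p - r](subrKA q); apply: in_ideal_genD. Qed.

Lemma eqmod_idealMl r p q : eqmod_ideal p q -> eqmod_ideal (r * p) (r * q).
Proof. by rewrite /eqmod_ideal -mulrBr; apply: in_ideal_genMl. Qed.

End IdealGen.

Lemma in_ideal_genZ (R : comNzRingType) (m : nat) (G : {mpoly R[m]} -> Prop) c p :
  in_ideal_gen G p -> in_ideal_gen G (c *: p).
Proof. by rewrite -mul_mpolyC; apply: in_ideal_genMl. Qed.

Section MpolyIdeal.
Variables (R : comNzRingType) (m m' : nat).

Lemma eqmod_ideal_linear (G : {mpoly R[m]} -> Prop)
    (f : {linear {mpoly R[m]} -> {mpoly R[m]}}) :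
  (forall d, eqmod_ideal G 'X_[d] (f 'X_[d])) -> forall p, eqmod_ideal G p (f p).
Proof.
move=> eqX p; rewrite /eqmod_ideal {1 2}[p]mpolyE linear_sum -sumrB.
by apply: in_ideal_gen_sum => d _; rewrite linearZ -scalerBr; apply/in_ideal_genZ/eqX.
Qed.

Lemma linear_in_ideal_gen (G : {mpoly R[m]} -> Prop) (H : {mpoly R[m']} -> Prop)
    (f : {linear {mpoly R[m]} -> {mpoly R[m']}}) :
  (forall d g, G g -> in_ideal_gen H (f ('X_[d] * g))) ->
  forall p, in_ideal_gen G p -> in_ideal_gen H (f p).
Proof.
move=> HX p [s [Gs ->]]; rewrite linear_sum; apply: in_ideal_gen_sum => x sx.
rewrite [x.1]mpolyE mulr_suml linear_sum; apply: in_ideal_gen_sum => d _.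
by rewrite -scalerAl linearZ; apply: in_ideal_genZ; apply: HX; apply: Gs.
Qed.

End MpolyIdeal.

Section LinearExtension.
Variables (R : nzRingType) (m : nat) (V : lmodType R) (g : 'X_{1..m} -> V).

Definition mlinext (p : {mpoly R[m]}) : V := \sum_(d <- msupp p) p@_d *: g d.

Lemma mlinextE p w : (msize p <= w)%N ->
  mlinext p = \sum_(d : 'X_{1..m < w}) p@_d *: g d.
Proof.
move=> le_p_w; set X : subFinType _ := 'X_{1..m < w}.
rewrite /mlinext (big_mksub X) ?msupp_uniq //=.
  by rewrite big_rmcond //= => d /memN_msupp_eq0->; rewrite scale0r.
by move=> d /msize_mdeg_lt /leq_trans; apply.
Qed.

Lemma mlinext_is_linear : linear mlinext.
Proof.
move=> c p q; pose w := maxn (msize p) (msize q).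
have le_p : (msize p <= w)%N by rewrite leq_maxl.
have le_q : (msize q <= w)%N by rewrite leq_maxr.
have le_cpq : (msize (c *: p + q) <= w)%N.
  apply: leq_trans (msizeD_le _ _) _.
  by rewrite geq_max le_q andbT (leq_trans (msizeZ_le _ _)).
rewrite !(mlinextE le_p, mlinextE le_q, mlinextE le_cpq) scaler_sumr -big_split.
by apply: eq_bigr => d _; rewrite mcoeffD mcoeffZ scalerDl scalerA.
Qed.

HB.instance Definition _ := GRing.isLinear.Build R {mpoly R[m]} V *:%R mlinext
  mlinext_is_linear.

Lemma mlinextX d : mlinext 'X_[d] = g d.
Proof. by rewrite /mlinext msuppX big_seq1 mcoeffX eqxx scale1r. Qed.

End LinearExtension.

Section DoubleSwap.
Variable E : finType.
Implicit Types (U V W : {set E}) (e x y : E).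

Definition exchange W x y : {set E} := (W :\ x) :|: [set y].

Lemma notin_setD1 W x y : x \notin W -> x \notin W :\ y.
Proof. by move=> xW; rewrite in_setD1 (negbTE xW) andbF. Qed.

Lemma ivec_inj U V : ivec U =1 ivec V -> U = V.
Proof.
move=> eqUV; apply/setP => e; move: (eqUV e); rewrite /ivec.
by case: (e \in U); case: (e \in V).
Qed.

Lemma ivec_lt U1 U2 e : (ivec U2 e < ivec U1 e) = (e \in U1) && (e \notin U2).
Proof. by rewrite /ivec ltz_nat; case: (e \in U1); case: (e \in U2). Qed.

Lemma exchange_id W x : x \in W -> exchange W x x = W.
Proof.
move=> xW; apply/setP => e; rewrite !inE.
by case: (eqVneq e x) => [->|]; rewrite ?xW ?orbT //= orbF.
Qed.

Lemma ivec_exchange W x y e : x \in W -> y \notin W :\ x ->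
  ivec (exchange W x y) e = ivec W e + eps y e - eps x e.
Proof.
move=> xW; case: (eqVneq y x) => [-> _|nyx]; first by rewrite exchange_id ?addrK.
rewrite in_setD1 nyx /= => yW; rewrite /ivec /eps !inE.
case: (eqVneq e x) => [->|nex]; first by rewrite eq_sym (negbTE nyx) xW addr0 subrr.
case: (eqVneq e y) => [->|ney]; first by rewrite (negbTE yW) add0r subr0.
by rewrite orbF addr0 subr0.
Qed.

Lemma exchangeK W x y : x \in W -> y \notin W -> exchange (exchange W x y) y x = W.
Proof.
move=> xW yW; have nxy : x != y by apply: contraNneq yW => <-.
have xX : x \notin exchange W x y :\ y by rewrite !inE eqxx (negbTE nxy) andbF.
have yX : y \in exchange W x y by rewrite !inE eqxx orbT.
by apply: ivec_inj => e; rewrite ivec_exchange // ivec_exchange ?notin_setD1 // subrK addrK.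
Qed.

Lemma double_swap_exchange U1 U2 x y :
  x \in U1 -> x \notin U2 -> y \in U2 -> y \notin U1 ->
  double_swap U1 U2 (exchange U1 x y) (exchange U2 y x).
Proof.
move=> xU1 xU2 yU2 yU1; exists x, y.
by split; rewrite ?ivec_lt ?xU1 ?yU2 // => e; rewrite ivec_exchange ?notin_setD1.
Qed.

Lemma double_swapP U1 U2 V1 V2 : double_swap U1 U2 V1 V2 ->
  exists x y, [/\ x \in U1, x \notin U2, y \in U2 & y \notin U1] /\
              V1 = exchange U1 x y /\ V2 = exchange U2 y x.
Proof.
move=> [x [y [+ + V1E V2E]]]; rewrite !ivec_lt => /andP[xU1 xU2] /andP[yU2 yU1].
exists x, y; split=> //; split; apply: ivec_inj => e.
  by rewrite V1E ivec_exchange ?notin_setD1.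
by rewrite V2E ivec_exchange ?notin_setD1.
Qed.

Lemma double_swap_sym U1 U2 V1 V2 :
  double_swap U1 U2 V1 V2 -> double_swap V1 V2 U1 U2.
Proof.
move=> /double_swapP[x [y [[xU1 xU2 yU2 yU1] [-> ->]]]].
have nxy : x != y by apply: contraNneq yU1 => <-.
rewrite -{2}(exchangeK xU1 yU1) -{2}(exchangeK yU2 xU2).
by apply: double_swap_exchange; rewrite !inE ?eqxx ?orbT ?(negbTE nxy) ?yU1 //
   eq_sym (negbTE nxy).
Qed.

Lemma double_swap_count U1 U2 V1 V2 e : double_swap U1 U2 V1 V2 ->
  ((e \in V1) + (e \in V2) = (e \in U1) + (e \in U2))%N.
Proof.
move=> /double_swapP[x [y [[xU1 xU2 yU2 yU1] [-> ->]]]].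
have nxy : x != y by apply: contraNneq yU1 => <-.
rewrite !inE; case: (eqVneq e x) => [->|nex].
  by rewrite (negbTE nxy) xU1 (negbTE xU2).
by case: (eqVneq e y) => [->|ney]; rewrite ?yU2 ?(negbTE yU1) ?orbF.
Qed.

Lemma xmon_double_swap (K : fieldType) U1 U2 V1 V2 : double_swap U1 U2 V1 V2 ->
  xmon K U1 * xmon K U2 = xmon K V1 * xmon K V2.
Proof.
move=> dsU; rewrite /xmon -!big_split /=; apply: eq_bigr => e _.
by rewrite -!exprD (double_swap_count e dsU).
Qed.

End DoubleSwap.

Section ToricMonomials.
Variables (E : finType) (K : fieldType) (B : {set {set E}}).
Local Notation T := (basisT B).
Local Notation nT := #|{: T}|.
Implicit Types (s : seq T) (u : T).

HB.instance Definition _ := GRing.LRMorphism.copy (@toric_map E K B)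
  (comp_mpoly [tuple xmon K (val (enum_val i)) | i < nT]).

Definition ymon s : SP K B := \prod_(u <- s) yvar K u.

Definition mult s (e : E) : nat := count (fun u => e \in val u) s.

Lemma ymon_cons u s : ymon (u :: s) = yvar K u * ymon s.
Proof. by rewrite /ymon big_cons. Qed.

Lemma perm_ymon s1 s2 : perm_eq s1 s2 -> ymon s1 = ymon s2.
Proof. exact: perm_big. Qed.

Lemma perm_mult s1 s2 : perm_eq s1 s2 -> mult s1 =1 mult s2.
Proof. by move=> /permP eq_s e; apply: eq_s. Qed.

Lemma mult_double_swap u1 u2 v1 v2 t :
  double_swap (val u1) (val u2) (val v1) (val v2) ->
  mult [:: v1, v2 & t] =1 mult [:: u1, u2 & t].
Proof. by move=> dsU e; rewrite /= addnA (double_swap_count e dsU) addnA. Qed.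

Lemma toric_map_yvar u : toric_map (yvar K u) = xmon K (val u).
Proof. by rewrite /toric_map /yvar comp_mpolyXU -tnth_nth tnth_mktuple enum_rankK. Qed.

Definition mult_mnm s : 'X_{1..#|{: E}|} := [multinom mult s (enum_val j) | j < #|{: E}|].

Lemma toric_map_ymon s : toric_map (ymon s) = 'X_[mult_mnm s].
Proof.
rewrite rmorph_prod /=; under eq_bigr do rewrite toric_map_yvar.
rewrite /xmon exchange_big mpolyXE_id (reindex (@enum_rank E)) /=; last first.
  by exists (@enum_val E predT) => e _; rewrite ?enum_rankK ?enum_valK.
apply: eq_bigr => e _; rewrite mnmE enum_rankK prodrXr /mult -sumn_count.
by rewrite sumnE big_map.
Qed.

Lemma eq_mult_mnm s1 s2 : mult_mnm s1 = mult_mnm s2 <-> mult s1 =1 mult s2.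
Proof.
split=> [eq_mnm e|eq_mult]; last by apply/mnmP => j; rewrite !mnmE eq_mult.
have := congr1 (fun d : 'X_{1..#|{: E}|} => d (enum_rank e)) eq_mnm.
by rewrite /= !mnmE enum_rankK.
Qed.

Lemma toric_map_ymon_eq s1 s2 :
  toric_map (ymon s1) = toric_map (ymon s2) <-> mult s1 =1 mult s2.
Proof.
rewrite -eq_mult_mnm !toric_map_ymon; split=> [eqX|-> //].
move/(congr1 (mcoeff (mult_mnm s1))): eqX; rewrite !mcoeffX eqxx.
by case: eqP => // _ /eqP; rewrite mulr1n mulr0n oner_eq0.
Qed.

Definition seq_of_mnm (d : 'X_{1..nT}) : seq T :=
  flatten [seq nseq (d j) (enum_val j) | j <- enum 'I_nT].

Definition mnm_of_seq s : 'X_{1..nT} := (\sum_(u <- s) U_(enum_rank u))%MM.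

Lemma mpolyX_ymon d : 'X_[d] = ymon (seq_of_mnm d).
Proof.
rewrite /ymon big_flatten big_map mpolyXE_id big_enum /=.
apply: eq_bigr => j _; rewrite big_nseq /yvar enum_valK.
by elim: (d j) => //= i <-; rewrite exprS.
Qed.

Lemma ymon_mpolyX s : ymon s = 'X_[mnm_of_seq s].
Proof.
elim: s => [|u s IHs]; first by rewrite /ymon /mnm_of_seq !big_nil mpolyX0.
by rewrite ymon_cons IHs /mnm_of_seq big_cons mpolyXD.
Qed.

Lemma count_seq_of_mnm d u : count_mem u (seq_of_mnm d) = d (enum_rank u).
Proof.
rewrite /seq_of_mnm count_flatten sumnE !big_map -enumT big_enum /=.
rewrite (bigD1 (enum_rank u)) //= count_nseq enum_rankK /= eqxx mul1n big1 ?addn0 //.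
move=> j neq_ju; rewrite count_nseq /= -(inj_eq enum_rank_inj) enum_valK.
by case: eqP neq_ju => // ->; rewrite eqxx.
Qed.

Lemma perm_seq_of_mnm s : perm_eq (seq_of_mnm (mnm_of_seq s)) s.
Proof.
apply/allP => u _; apply/eqP; rewrite /= count_seq_of_mnm /mnm_of_seq mnm_sumE.
rewrite -sumn_count sumnE big_map; apply: eq_bigr => v _.
by rewrite mnm1E (inj_eq enum_rank_inj).
Qed.

Lemma double_swap_ideal_toric_map0 p :
  in_ideal_gen (@double_swap_binomial E K B) p -> toric_map p = 0.
Proof.
move=> [s [Gs ->]]; rewrite raddf_sum big1_seq // => x /andP[_ /Gs].
move=> [u1 [u2 [v1 [v2 [dsU ->]]]]] /=.
by rewrite rmorphM rmorphB !rmorphM /= !toric_map_yvar (xmon_double_swap K dsU) subrr mulr0.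
Qed.

End ToricMonomials.

Lemma perm_eq_map_cons (T1 T2 : eqType) (f : T1 -> T2) s x t :
  perm_eq (map f s) (x :: t) ->
  exists w r, [/\ perm_eq s (w :: r), f w = x & perm_eq (map f r) t].
Proof.
move=> eq_fs; have /mapP[w sw eq_x] : x \in map f s by rewrite (perm_mem eq_fs) mem_head.
subst x; have eq_s := perm_to_rem sw; exists w, (rem w s); split=> //.
rewrite -(perm_cons (f w)) -map_cons.
by apply: perm_trans (perm_map f _) eq_fs; rewrite perm_sym.
Qed.

Section AlphaBases.
Variables (n : nat) (k : 'I_n -> nat) (B : {set {set 'I_n}}).
Local Notation EA := (alphaE k).
Local Notation TA := (basisT (alpha_bases k B)).
Local Notation TM := (basisT B).
Implicit Types (W : {set EA}) (U : {set 'I_n}).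

Definition elt i (a : 'I_(k i)) : EA := Tagged (fun i0 => 'I_(k i0)) a.

Lemma elt_eq i (a b : 'I_(k i)) : (elt a == elt b) = (a == b).
Proof. exact: eq_Tagged. Qed.

Lemma elt_neq i j (a : 'I_(k i)) (b : 'I_(k j)) : i != j -> (elt a == elt b) = false.
Proof. by move=> nij; apply: contraNF nij => /eqP/(congr1 tag)/= ->. Qed.

Definition fiber W i : {set 'I_(k i)} := [set a | elt a \in W].

Definition is_lift W U : Prop := forall i, #|fiber W i| = (i \in U).

Lemma sum_fiber W i : (\sum_(a < k i) (elt a \in W) = #|fiber W i|)%N.
Proof.
rewrite -sum1_card [RHS]big_mkcond /=.
by apply: eq_bigr => a _; rewrite inE; case: (_ \in _).
Qed.

Lemma sum_ivec_fiber W i : \sum_(a < k i) ivec W (elt a) = #|fiber W i|%:Z.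
Proof. by rewrite -sum_fiber -natz natr_sum; apply: eq_bigr => a _; rewrite natz. Qed.

Lemma alpha_basesP W : W \in alpha_bases k B <-> exists2 U, U \in B & is_lift W U.
Proof.
rewrite inE; split=> [/exists_inP[U UB /forallP liftW]|[U UB liftW]].
  by exists U => // i; apply/eqP; rewrite -sum_fiber; apply: liftW.
by apply/exists_inP; exists U => //; apply/forallP => i; rewrite sum_fiber liftW.
Qed.

Section Lift.
Variables (W : {set EA}) (U : {set 'I_n}).
Hypothesis liftW : is_lift W U.

Lemma lift_uniq i (a b : 'I_(k i)) : elt a \in W -> elt b \in W -> a = b.
Proof.
move=> aW bW; have /card_le1_eqP : (#|fiber W i| <= 1)%N by rewrite liftW leq_b1.
by apply; rewrite inE.
Qed.

Lemma lift_mem i (a : 'I_(k i)) : elt a \in W -> i \in U.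
Proof.
by move=> aW; rewrite -[i \in U]lt0b -liftW; apply/card_gt0P; exists a; rewrite inE.
Qed.

Lemma lift_memP i : i \in U -> exists a : 'I_(k i), elt a \in W.
Proof. by rewrite -[i \in U]lt0b -liftW => /card_gt0P[a]; rewrite inE; exists a. Qed.

End Lift.

Lemma sum_eps_elt i j (b : 'I_(k j)) : \sum_(a < k i) eps (elt b) (elt a) = eps j i.
Proof.
rewrite /eps; case: (eqVneq i j) => [eq_ij|nij]; last first.
  by rewrite big1 // => a _; rewrite elt_neq.
by subst i; rewrite (bigD1 b) //= eqxx big1 ?addr0 // => a nab; rewrite elt_eq (negbTE nab).
Qed.

Lemma is_lift_exchange W U i j (a : 'I_(k i)) (b : 'I_(k j)) :
  is_lift W U -> elt a \in W -> elt b \notin W :\ elt a -> j \notin U :\ i ->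
  is_lift (exchange W (elt a) (elt b)) (exchange U i j).
Proof.
move=> liftW aW bW jU i'; apply/eqP; rewrite -eqz_nat -sum_ivec_fiber.
under eq_bigr do rewrite ivec_exchange //.
rewrite sumrB big_split /= !sum_eps_elt sum_ivec_fiber liftW.
by rewrite -(ivec_exchange _ (lift_mem liftW aW) jU).
Qed.

Definition proj_set W : {set 'I_n} := [set i | fiber W i != set0].

Lemma proj_set_lift W U : is_lift W U -> proj_set W = U.
Proof. by move=> liftW; apply/setP => i; rewrite inE -cards_eq0 liftW; case: (i \in U). Qed.

Lemma proj_set_in (w : TA) : proj_set (val w) \in B.
Proof. by have /alpha_basesP[U UB liftW] := valP w; rewrite (proj_set_lift liftW). Qed.

Definition proj (w : TA) : TM := exist _ (proj_set (val w)) (proj_set_in w).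

Lemma lift_proj (w : TA) : is_lift (val w) (val (proj w)).
Proof. by have /alpha_basesP[U _ liftW] := valP w; rewrite /= (proj_set_lift liftW). Qed.

Lemma proj_inj_sub (w w' : TA) : proj w' = proj w -> val w' \subset val w -> w' = w.
Proof.
move=> eq_proj subw; apply/val_inj/eqP; rewrite eqEsubset subw /=.
apply/subsetP => -[i a] aw; have := lift_mem (lift_proj w) aw; rewrite -eq_proj.
move=> /(lift_memP (lift_proj w')) [b bw']; have bw := subsetP subw _ bw'.
by rewrite (lift_uniq (lift_proj w) aw bw).
Qed.

Lemma exchange_basis (w : TA) i j (a : 'I_(k i)) (b : 'I_(k j)) :
  elt a \in val w -> elt b \notin val w :\ elt a -> j \notin val (proj w) :\ i ->
  exchange (val (proj w)) i j \in B ->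
  exists v : TA, val v = exchange (val w) (elt a) (elt b) /\
                 val (proj v) = exchange (val (proj w)) i j.
Proof.
move=> aw bw jw exB; have liftV := is_lift_exchange (lift_proj w) aw bw jw.
have vA : exchange (val w) (elt a) (elt b) \in alpha_bases k B.
  by apply/alpha_basesP; exists (exchange (val (proj w)) i j).
by exists (exist (fun W => W \in alpha_bases k B) _ vA); split=> //; apply: proj_set_lift.
Qed.

Lemma double_swap_lift (w1 w2 : TA) i j (a : 'I_(k i)) (b : 'I_(k j)) :
  elt a \in val w1 -> elt a \notin val w2 -> elt b \in val w2 -> elt b \notin val w1 ->
  j \notin val (proj w1) :\ i -> i \notin val (proj w2) :\ j ->
  exchange (val (proj w1)) i j \in B -> exchange (val (proj w2)) j i \in B ->
  exists v1 v2 : TA, [/\ double_swap (val w1) (val w2) (val v1) (val v2),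
    val v1 = exchange (val w1) (elt a) (elt b),
    val (proj v1) = exchange (val (proj w1)) i j &
    val (proj v2) = exchange (val (proj w2)) j i].
Proof.
move=> aw1 aw2 bw2 bw1 jw1 iw2 exB1 exB2.
have [v1 [ev1 pv1]] := exchange_basis aw1 (notin_setD1 _ bw1) jw1 exB1.
have [v2 [ev2 pv2]] := exchange_basis bw2 (notin_setD1 _ aw2) iw2 exB2.
by exists v1, v2; split=> //; rewrite ev1 ev2; apply: double_swap_exchange.
Qed.

Definition same_shape (s1 s2 : seq TA) : Prop :=
  perm_eq (map proj s1) (map proj s2) /\ mult s1 =1 mult s2.

Lemma perm_same_shape s1 s2 : perm_eq s1 s2 -> same_shape s1 s2.
Proof. by move=> eq_s; split; [apply: perm_map | apply: perm_mult]. Qed.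

Lemma same_shape_trans s1 s2 s3 : same_shape s1 s2 -> same_shape s2 s3 -> same_shape s1 s3.
Proof.
move=> [eq_proj12 eq_mult12] [eq_proj23 eq_mult23].
by split=> [|e]; [apply: perm_trans eq_proj23 | rewrite eq_mult12].
Qed.

End AlphaBases.

Section SwapEquiv.
Variables (K : fieldType) (n : nat) (k : 'I_n -> nat) (B : {set {set 'I_n}}).
Local Notation EA := (alphaE k).
Local Notation TA := (basisT (alpha_bases k B)).
Local Notation proj := (@proj n k B).
Implicit Types (s t r : seq TA) (w : TA).

Definition swap_equiv s1 s2 :=
  eqmod_ideal (@double_swap_binomial EA K (alpha_bases k B)) (ymon K s1) (ymon K s2).

Lemma swap_equiv_refl s : swap_equiv s s.
Proof. exact: eqmod_ideal_refl. Qed.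

Lemma swap_equiv_sym s1 s2 : swap_equiv s1 s2 -> swap_equiv s2 s1.
Proof. exact: eqmod_ideal_sym. Qed.

Lemma swap_equiv_trans s1 s2 s3 :
  swap_equiv s1 s2 -> swap_equiv s2 s3 -> swap_equiv s1 s3.
Proof. exact: eqmod_ideal_trans. Qed.

Lemma perm_swap_equiv s1 s2 : perm_eq s1 s2 -> swap_equiv s1 s2.
Proof. by move/(perm_ymon K) => eq_s; rewrite /swap_equiv eq_s; apply: eqmod_ideal_refl. Qed.

Lemma swap_equiv_cons w s1 s2 : swap_equiv s1 s2 -> swap_equiv (w :: s1) (w :: s2).
Proof. by rewrite /swap_equiv !ymon_cons; apply: eqmod_idealMl. Qed.

Lemma swap_equiv_double_swap w1 w2 v1 v2 t :
  double_swap (val w1) (val w2) (val v1) (val v2) ->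
  swap_equiv [:: w1, w2 & t] [:: v1, v2 & t].
Proof.
move=> dsW; rewrite /swap_equiv /eqmod_ideal !ymon_cons !mulrA -mulrBl mulrC.
by apply/in_ideal_genMl/in_ideal_gen_gen; exists w1, w2, v1, v2.
Qed.

Lemma fiber_swap w1 w2 i (a b : 'I_(k i)) :
  elt a \in val w1 -> elt b \in val w2 -> elt b \notin val w1 ->
  exists v1 v2 : TA, [/\ double_swap (val w1) (val w2) (val v1) (val v2),
    val v1 = exchange (val w1) (elt a) (elt b), proj v1 = proj w1 & proj v2 = proj w2].
Proof.
move=> aw1 bw2 bw1; have nab : a != b by apply: contraNneq bw1 => <-.
have aw2 : elt a \notin val w2.
  by apply: contra nab => aw2; rewrite (lift_uniq (lift_proj w2) aw2 bw2).
have iw1 := lift_mem (lift_proj w1) aw1; have iw2 := lift_mem (lift_proj w2) bw2.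
have exB1 : exchange (val (proj w1)) i i \in B by rewrite exchange_id ?(valP (proj w1)).
have exB2 : exchange (val (proj w2)) i i \in B by rewrite exchange_id ?(valP (proj w2)).
have [v1 [v2 [dsW ev1 pv1 pv2]]] :=
  double_swap_lift aw1 aw2 bw2 bw1 (negbT (setD11 _ _)) (negbT (setD11 _ _)) exB1 exB2.
exists v1, v2; split=> //; apply: val_inj.
  by rewrite pv1 exchange_id.
by rewrite pv2 exchange_id.
Qed.

Lemma fiber_step w w' r : proj w' = proj w -> ~~ (val w' \subset val w) ->
  (forall e, e \in val w -> 0 < mult (w' :: r) e)%N ->
  exists v t, [/\ same_shape (w' :: r) (v :: t), swap_equiv (w' :: r) (v :: t),
    proj v = proj w & val v :\: val w \proper val w' :\: val w].
Proof.
move=> eq_proj /subsetPn[[i b] bw' bw] cover_w.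
have iw : i \in val (proj w) by rewrite -eq_proj; apply: (lift_mem (lift_proj w') bw').
have [a aw] := lift_memP (lift_proj w) iw.
have nab : a != b by apply: contraNneq bw => <-.
have aw' : elt a \notin val w'.
  by apply: contra nab => aw'; rewrite (lift_uniq (lift_proj w') aw' bw').
have /hasP[w'' rw'' aw''] : has (fun u : TA => elt a \in val u) r.
  by rewrite has_count; move: (cover_w _ aw); rewrite /= (negbTE aw').
have [v [v'' [dsW ev pv pv'']]] := fiber_swap bw' aw'' aw'.
have eq_r : perm_eq (w' :: r) [:: w', w'' & rem w'' r] by rewrite perm_cons perm_to_rem.
exists v, (v'' :: rem w'' r); split.
- apply: same_shape_trans (perm_same_shape eq_r) _.
  by split=> [|e]; rewrite ?(mult_double_swap _ dsW) //= pv pv''.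
- exact: swap_equiv_trans (perm_swap_equiv eq_r) (swap_equiv_double_swap _ dsW).
- by rewrite pv.
apply/properP; split.
  apply/subsetP => e; rewrite ev !inE => /andP[ew]; rewrite ew.
  by case/orP => [/andP[_ //]|/eqP eq_e]; move: ew; rewrite eq_e aw.
exists (elt b); first by rewrite inE bw bw'.
by rewrite ev !inE eqxx elt_eq eq_sym (negbTE nab) andbF.
Qed.

Lemma move_to_head w w' r : proj w' = proj w ->
  (forall e, e \in val w -> 0 < mult (w' :: r) e)%N ->
  exists t, same_shape (w' :: r) (w :: t) /\ swap_equiv (w' :: r) (w :: t).
Proof.
have [d] := ubnP #|val w' :\: val w|; elim: d w' r => // d IHd w' r lt_d eq_proj cover_w.
have [subw|nsubw] := boolP (val w' \subset val w).
  rewrite (proj_inj_sub eq_proj subw); exists r.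
  by split; [apply: perm_same_shape | apply: swap_equiv_refl].
have [v [t [sim_v eqv_v pv ltv]]] := fiber_step eq_proj nsubw cover_w.
have lt_v : (#|val v :\: val w| < d)%N.
  by rewrite -ltnS; apply: leq_trans (proper_card ltv) lt_d.
have cover_v : (forall e, e \in val w -> 0 < mult (v :: t) e)%N.
  by move=> e ew; rewrite -sim_v.2; apply: cover_w.
have [t' [sim_t' eqv_t']] := IHd v t lt_v pv cover_v.
by exists t'; split; [apply: same_shape_trans sim_t' | apply: swap_equiv_trans eqv_t'].
Qed.

Lemma same_shape_swap_equiv s1 s2 : same_shape s1 s2 -> swap_equiv s1 s2.
Proof.
elim: s1 s2 => [|w s1 IHs] s2 [eq_proj eq_mult].
  by case: s2 eq_proj {eq_mult} => [_|? ? /perm_size //]; apply: swap_equiv_refl.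
rewrite perm_sym in eq_proj.
have [w' [r [eq_s2 pw' eq_r]]] := perm_eq_map_cons eq_proj.
have cover_w : (forall e, e \in val w -> 0 < mult (w' :: r) e)%N.
  by move=> e ew; rewrite -(perm_mult eq_s2) -eq_mult /= ew.
have [t [[eq_pt eq_mt] eqv_t]] := move_to_head pw' cover_w.
have sim_t : same_shape s1 t.
  have eq_rt : perm_eq (map proj r) (map proj t) by rewrite -(perm_cons (proj w)) -{1}pw'.
  split; first by rewrite perm_sym in eq_r; apply: perm_trans eq_r eq_rt.
  by move=> e; apply/(@addnI (e \in val w)); rewrite -[LHS]/(mult (w :: s1) e) eq_mult
    (perm_mult eq_s2) eq_mt.
apply: swap_equiv_trans (swap_equiv_cons w (IHs t sim_t)) _.
apply: swap_equiv_trans (swap_equiv_sym eqv_t) _.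
by apply: perm_swap_equiv; rewrite perm_sym.
Qed.

End SwapEquiv.

Section Lifting.
Variables (K : fieldType) (n : nat) (k : 'I_n -> nat) (B : {set {set 'I_n}}).
Local Notation EA := (alphaE k).
Local Notation BA := (alpha_bases k B).
Local Notation TA := (basisT BA).
Local Notation TM := (basisT B).
Local Notation proj := (@proj n k B).
Local Notation IA := (in_ideal_gen (@double_swap_binomial EA K BA)).
Local Notation eqmodA := (eqmod_ideal (@double_swap_binomial EA K BA)).
Implicit Types (D : EA -> nat) (u t : seq TM) (s : seq TA).

Definition lifts D u s : bool := perm_eq (map proj s) u && [forall e, mult s e == D e].

Lemma liftsP D u s : reflect (perm_eq (map proj s) u /\ mult s =1 D) (lifts D u s).
Proof.
apply: (iffP andP) => -[eq_u eq_m]; split=> //.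
  by move=> e; apply/eqP/(forallP eq_m).
by apply/forallP => e; rewrite eq_m.
Qed.

Lemma lifts_swap_equiv D u s1 s2 : lifts D u s1 -> lifts D u s2 -> swap_equiv K s1 s2.
Proof.
move=> /liftsP[eq_u1 eq_m1] /liftsP[eq_u2 eq_m2]; apply: same_shape_swap_equiv.
by split=> [|e]; [rewrite (permPr eq_u2) | rewrite eq_m1 eq_m2].
Qed.

(* Every lift of [u] has length [size u], so searching tuples finds one if it exists. *)
Definition lift_ymon D u : SP K BA :=
  if [pick t : (size u).-tuple TA | lifts D u t] is Some t then ymon K t else 0.

Lemma lift_ymonP D u :
  (exists2 s, lifts D u s & lift_ymon D u = ymon K s) \/
  ((forall s, ~~ lifts D u s) /\ lift_ymon D u = 0).
Proof.
rewrite /lift_ymon; case: pickP => [t lift_t|nolift]; [left; exists t | right] => //.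
split=> // s; apply/negP => lift_s.
have size_s : size s == size u.
  by case/liftsP: lift_s => /perm_size; rewrite size_map => ->.
by have := nolift (Tuple size_s); rewrite /= lift_s.
Qed.

Lemma lift_ymon_transfer D u1 u2 :
  (forall s1, lifts D u1 s1 -> exists2 s2, lifts D u2 s2 & swap_equiv K s1 s2) ->
  (forall s2, lifts D u2 s2 -> exists2 s1, lifts D u1 s1 & swap_equiv K s2 s1) ->
  eqmodA (lift_ymon D u1) (lift_ymon D u2).
Proof.
move=> lift12 lift21.
case: (lift_ymonP D u1) => [[s1 lift1 ->]|[nolift1 ->]];
  case: (lift_ymonP D u2) => [[s2 lift2 ->]|[nolift2 ->]].
- have [s2' lift2' eqv] := lift12 _ lift1.
  exact: eqmod_ideal_trans eqv (lifts_swap_equiv lift2' lift2).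
- by have [s2' /(negP (nolift2 s2'))] := lift12 _ lift1.
- by have [s1' /(negP (nolift1 s1'))] := lift21 _ lift2.
- exact: eqmod_ideal_refl.
Qed.

Lemma lifts_lift_ymon D u s : lifts D u s -> eqmodA (ymon K s) (lift_ymon D u).
Proof.
move=> lift_s; case: (lift_ymonP D u) => [[s' lift_s' ->]|[nolift _]].
  exact: lifts_swap_equiv lift_s lift_s'.
by have /negP := nolift s.
Qed.

Lemma lifts_double_swap D (u1 u2 v1 v2 : TM) t s :
  double_swap (val u1) (val u2) (val v1) (val v2) -> lifts D [:: u1, u2 & t] s ->
  exists2 s', lifts D [:: v1, v2 & t] s' & swap_equiv K s s'.
Proof.
move=> dsU /liftsP[eq_u eq_m].
have [w1 [r1 [eq_s pw1 eq_r1]]] := perm_eq_map_cons eq_u.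
have [w2 [r [eq_r1' pw2 eq_r]]] := perm_eq_map_cons eq_r1.
have eq_s' : perm_eq s [:: w1, w2 & r] by apply: perm_trans eq_s _; rewrite perm_cons.
have [i [j [[iu1 iu2 ju2 ju1] [ev1 ev2]]]] := double_swapP dsU.
have [a aw1] : exists a : 'I_(k i), elt a \in val w1.
  by apply: (lift_memP (lift_proj w1)); rewrite pw1.
have [b bw2] : exists b : 'I_(k j), elt b \in val w2.
  by apply: (lift_memP (lift_proj w2)); rewrite pw2.
have aw2 : elt a \notin val w2.
  by apply: contra iu2 => aw2; rewrite -pw2 (lift_mem (lift_proj w2) aw2).
have bw1 : elt b \notin val w1.
  by apply: contra ju1 => bw1; rewrite -pw1 (lift_mem (lift_proj w1) bw1).
have jw1 : j \notin val (proj w1) :\ i by rewrite pw1 notin_setD1.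
have iw2 : i \notin val (proj w2) :\ j by rewrite pw2 notin_setD1.
have exB1 : exchange (val (proj w1)) i j \in B by rewrite pw1 -ev1 (valP v1).
have exB2 : exchange (val (proj w2)) j i \in B by rewrite pw2 -ev2 (valP v2).
have [v1' [v2' [dsW _ pv1 pv2]]] := double_swap_lift aw1 aw2 bw2 bw1 jw1 iw2 exB1 exB2.
exists [:: v1', v2' & r].
  apply/liftsP; split=> [/=|e]; last by rewrite (mult_double_swap _ dsW) -(perm_mult eq_s').
  have -> : proj v1' = v1 by apply: val_inj; rewrite pv1 pw1 ev1.
  have -> : proj v2' = v2 by apply: val_inj; rewrite pv2 pw2 ev2.
  by rewrite !perm_cons.
exact: swap_equiv_trans (perm_swap_equiv K eq_s') (swap_equiv_double_swap K r dsW).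
Qed.

Lemma perm_lifts D u1 u2 : perm_eq u1 u2 -> lifts D u1 =1 lifts D u2.
Proof. by move=> /permPr eq_u s; rewrite /lifts eq_u. Qed.

Lemma lift_ymon_double_swap D (u1 u2 v1 v2 : TM) t :
  double_swap (val u1) (val u2) (val v1) (val v2) ->
  eqmodA (lift_ymon D [:: u1, u2 & t]) (lift_ymon D [:: v1, v2 & t]).
Proof.
move=> dsU; apply: lift_ymon_transfer => s; first exact: lifts_double_swap.
exact: lifts_double_swap (double_swap_sym dsU).
Qed.

Local Notation lift_poly D := (mlinext (fun d => lift_ymon D (seq_of_mnm d))).

Lemma lift_poly_ymon D u : eqmodA (lift_poly D (ymon K u)) (lift_ymon D u).
Proof.
rewrite (ymon_mpolyX K) mlinextX; have eq_u := perm_seq_of_mnm u.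
apply: lift_ymon_transfer => s lift_s; exists s; try apply: swap_equiv_refl.
  by rewrite -(perm_lifts _ eq_u).
by rewrite (perm_lifts _ eq_u).
Qed.

Lemma lift_poly_ideal D q :
  in_ideal_gen (@double_swap_binomial 'I_n K B) q -> IA (lift_poly D q).
Proof.
apply: linear_in_ideal_gen => d _ [u1 [u2 [v1 [v2 [dsU ->]]]]].
have ymon2 (w1 w2 : TM) :
    ymon K (seq_of_mnm d) * (yvar K w1 * yvar K w2) = ymon K [:: w1, w2 & seq_of_mnm d].
  by rewrite !ymon_cons mulrC -mulrA.
rewrite (mpolyX_ymon K) mulrBr !ymon2 linearB.
apply: eqmod_ideal_trans (lift_poly_ymon D _) _.
apply: eqmod_ideal_trans (lift_ymon_double_swap D _ dsU) _.
exact: eqmod_ideal_sym (lift_poly_ymon D _).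
Qed.

Lemma mult_proj s i : mult (map proj s) i = (\sum_(a < k i) mult s (elt a))%N.
Proof.
elim: s => [|w s IHs]; first by rewrite big1.
by rewrite /= big_split /= sum_fiber (lift_proj w) IHs.
Qed.

Lemma same_mult_swap_equiv (whiteB : white K B) s1 s2 :
  mult s1 =1 mult s2 -> swap_equiv K s1 s2.
Proof.
move=> eq_m; pose D := mult s1.
have toric0 : toric_map (ymon K (map proj s1) - ymon K (map proj s2)) = 0.
  apply/eqP; rewrite raddfB subr_eq0; apply/eqP/toric_map_ymon_eq => i.
  by rewrite !mult_proj; apply: eq_bigr => a _; apply: eq_m.
have := lift_poly_ideal D ((whiteB _).1 (introT eqP toric0)); rewrite linearB => eq_lift.
have lift1 : lifts D (map proj s1) s1 by apply/liftsP.
have lift2 : lifts D (map proj s2) s2 by apply/liftsP; split=> // e; rewrite /D eq_m.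
apply: eqmod_ideal_trans (lifts_lift_ymon lift1) _.
apply: eqmod_ideal_trans (eqmod_ideal_sym (lift_poly_ymon D _)) _.
apply: eqmod_ideal_trans eq_lift _.
apply: eqmod_ideal_trans (lift_poly_ymon D _) _.
exact: eqmod_ideal_sym (lifts_lift_ymon lift2).
Qed.

Lemma alpha_toric_kernel_in_ideal (whiteB : white K B) p : toric_map p = 0 -> IA p.
Proof.
move=> toric0.
(* a monomial in each toric fibre *)
pose rep d := ymon K (epsilon (inhabits [::]) (fun s : seq TA => mult_mnm s = d)).
have eqX d : eqmodA 'X_[d] ((mlinext rep \o @toric_map EA K BA) 'X_[d]).
  rewrite /= (mpolyX_ymon K) toric_map_ymon mlinextX.
  apply: same_mult_swap_equiv whiteB _ _ _.
  apply/eq_mult_mnm; set P := fun s : seq TA => _.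
  by rewrite (epsilon_spec (inhabits [::]) P (ex_intro P (seq_of_mnm d) erefl)).
by have := eqmod_ideal_linear eqX p; rewrite /= toric0 linear0 /eqmod_ideal subr0.
Qed.

End Lifting.

Theorem corollary2p5 (K : fieldType) (n : nat) (k : 'I_n -> nat)
  (B : {set {set 'I_n}}) :
  (forall i, (0 < k i)%N) ->
  is_matroid B ->
  white K B ->
  white K (alpha_bases k B).
Proof.
move=> _ _ whiteB p; split=> [/eqP|]; first exact: alpha_toric_kernel_in_ideal.
by move/double_swap_ideal_toric_map0/eqP.
Qed.
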